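(* For each $n,k\ge1$ there exist constants $A_{n,k},C_{n,k}$ such that if $A=aH-\sum_{i=1}^nb_iE_i\in U_5$ is reduced and satisfies $a>A_{n,k}$, $3a-\sum_{i=1}^{\min\{n,9\}}b_i>C_{n,k}$ and $3a-\sum_{i=1}^nb_i\ge1$, then $A\ge kH-kE_1$. In particular $A$ is not minimal in $U_5$.
   Context: $X=\mathbb{CP}^2\#n\overline{\mathbb{CP}}^2$, $K_0=-3H+E_1+\cdots+E_n$, $\mathrm{ind}(A):=A^2-K_0\cdot A$, $U_5=\{A\in H_2(X;\mathbb{Z}):\mathrm{ind}(A)\ge2k,\ A\cdot H>0\}$ (note $kH-kE_1\in U_5$). With $H^2(X;\mathbb{R})\cong\mathbb{R}^{n+1}$ via $(x_0,\dots,x_n)\leftrightarrow x_0PD(H)-\sum x_iPD(E_i)$, the reduced cone $\mathcal{P}$ is: $0<x_1<x_0$ ($n=1$); $0<x_2\le x_1$, $x_1+x_2<x_0$ ($n=2$); $0<x_n\le\cdots\le x_1$, $x_1+x_2+x_3\le x_0$, $\sum x_i^2<x_0^2$ ($n\ge3$); $\mathcal{P}^{c_1>0}=\{[\omega]\in\mathcal{P}:\omega(3H-\sum E_i)>0\}$. For $A,B\in U_5$, $A\ge B$ means $\omega(A)\ge\omega(B)$ for all $[\omega]\in\mathcal{P}^{c_1>0}$; $A$ is minimal if no other $B\in U_5$ satisfies $A\ge B$. A class $aH-\sum b_iE_i$ is reduced if $a>0$, $b_1\ge\cdots\ge b_n\ge0$, $a\ge b_1+b_2+b_3$. *)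

From HB Require Import structures.
From mathcomp Require Import all_boot all_order all_algebra.
From mathcomp Require Import Rstruct.
Set Implicit Arguments. Unset Strict Implicit. Unset Printing Implicit Defensive.
Import Order.TTheory GRing.Theory Num.Theory.
Local Open Scope ring_scope.

(* H_2(X;Z) for X = CP^2 # n CP^2-bar: a class aH - sum_{i=1}^n b_i E_i is the
   pair (a, b) with b : 'I_n -> int; the ordinal j : 'I_n stands for E_{j+1}. *)
Definition hclass (n : nat) := (int * {ffun 'I_n -> int})%type.

(* 1-based coefficient b_i (i = 1..n), padded by 0 outside 1..n. *)
Definition bcoef n (A : hclass n) (i : nat) : int :=
  if i is j.+1 then oapp A.2 0 (insub j : option 'I_n) else 0.

(* intersection form: H^2 = 1, E_i^2 = -1, other products 0 *)
Definition hdot n (A B : hclass n) : int :=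
  A.1 * B.1 - \sum_(i < n) A.2 i * B.2 i.

Definition Hcl n : hclass n := (1, [ffun => 0]).
(* K_0 = -3H + E_1 + ... + E_n = -3H - sum (-1) E_i *)
Definition K0 n : hclass n := (-3, [ffun => -1]).
Definition kHkE1 n (k : nat) : hclass n :=
  (k%:Z, [ffun i : 'I_n => if val i == 0%N then k%:Z else 0]).

Definition ind n (A : hclass n) : int := hdot A A - hdot (K0 n) A.

Definition inU5 n (k : nat) (A : hclass n) : Prop :=
  2 * k%:Z <= ind A /\ 0 < hdot A (Hcl n).

Definition reduced n (A : hclass n) : Prop :=
  0 < A.1 /\ (forall i j : 'I_n, (i <= j)%N -> A.2 j <= A.2 i) /\
  (forall i : 'I_n, 0 <= A.2 i) /\
  bcoef A 1 + bcoef A 2 + bcoef A 3 <= A.1.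

(* H^2(X;R) = R^{n+1}: (x_0, x) <-> x_0 PD(H) - sum x_i PD(E_i); x j stands for x_{j+1}. *)
Definition cohom (R : realFieldType) (n : nat) := (R * {ffun 'I_n -> R})%type.

Definition xcoef (R : realFieldType) n (w : cohom R n) (i : nat) : R :=
  if i is j.+1 then oapp w.2 0 (insub j : option 'I_n) else 0.

Definition omega (R : realFieldType) n (w : cohom R n) (A : hclass n) : R :=
  w.1 * A.1%:~R - \sum_(i < n) w.2 i * (A.2 i)%:~R.

Definition inP (R : realFieldType) n (w : cohom R n) : Prop :=
  let x0 := w.1 in let x := xcoef w in
  match n with
  | 1%N => 0 < x 1%N /\ x 1%N < x0
  | 2%N => 0 < x 2%N /\ x 2%N <= x 1%N /\ x 1%N + x 2%N < x0
  | _ => 0 < x n /\ (forall i, (1 <= i < n)%N -> x i.+1 <= x i) /\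
         x 1%N + x 2%N + x 3%N <= x0 /\
         \sum_(i < n) w.2 i ^+ 2 < x0 ^+ 2
  end.

(* c_1 = PD(3H - sum E_i) *)
Definition c1cl n : hclass n := (3, [ffun => 1]).

Definition inPc1 (R : realFieldType) n (w : cohom R n) : Prop :=
  inP w /\ 0 < omega w (c1cl n).

Definition cge (R : realFieldType) n (A B : hclass n) : Prop :=
  forall w : cohom R n, inPc1 w -> omega w B <= omega w A.

Definition minimalU5 (R : realFieldType) n (k : nat) (A : hclass n) : Prop :=
  inU5 k A /\ ~ (exists B : hclass n, inU5 k B /\ B <> A /\ cge R A B).

From HB Require Import structures.
From mathcomp Require Import all_boot all_order all_algebra.
From mathcomp Require Import Rstruct lra zify.
Set Implicit Arguments. Unset Strict Implicit. Unset Printing Implicit Defensive.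
Import Order.TTheory GRing.Theory Num.Theory.
Local Open Scope ring_scope.

(* Proof of Lemma 4.5, with the constants A_{n,k} = k and C_{n,k} = 12k.

   Both a reduced class A = aH - sum b_i E_i and a class [w] = x_0 H - sum x_i E_i
   of the reduced cone give a "reduced sequence": p |-> b_p (resp. x_p), extended
   by zero outside 1..n, is nonnegative, nonincreasing from index 1 on, and
   b_1 + b_2 + b_3 <= a (resp. x_1 + x_2 + x_3 <= x_0).  For two such sequences
   an explicit certificate (a sum of products of nonnegative factors) proves the
   nine-point inequality
     k (x_0 - x_1) <= a x_0 - sum_{p<=9} x_p b_p - b_9 (3 x_0 - sum_{p<=9} x_p)
   as soon as 12 k < 3a - sum_{p<=9} b_p.  The tail sum_{p>9} x_p b_p is at most
   b_9 sum_{p>9} x_p, and the condition w(c_1) > 0 bounds sum_{p>9} x_p by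
   3 x_0 - sum_{p<=9} x_p; together this gives w(A) >= k (x_0 - x_1) = w(kH - kE_1).
   Finally kH - kE_1 lies in U_5 and differs from A (since a > k), so A >= kH - kE_1
   shows that A is not minimal. *)

Lemma xcoefE (R : realFieldType) n (w : cohom R n) (j : 'I_n) : xcoef w j.+1 = w.2 j.
Proof. by rewrite /xcoef /= valK. Qed.

Lemma bcoefE n (A : hclass n) (j : 'I_n) : bcoef A j.+1 = A.2 j.
Proof. by rewrite /bcoef /= valK. Qed.

Lemma xcoef_out (R : realFieldType) n (w : cohom R n) p :
  (p == 0)%N || (n < p)%N -> xcoef w p = 0.
Proof. by case: p => //= j hj; rewrite /xcoef insubF //; apply/negbTE; rewrite -leqNgt. Qed.

Lemma bcoef_out n (A : hclass n) p : (p == 0)%N || (n < p)%N -> bcoef A p = 0.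
Proof. by case: p => //= j hj; rewrite /bcoef insubF //; apply/negbTE; rewrite -leqNgt. Qed.

Lemma sum_nat_padded (V : nmodType) M N (F : nat -> V) : (M <= N)%N ->
  (forall p, (M < p)%N -> F p = 0) ->
  \sum_(1 <= p < M.+1) F p = \sum_(1 <= p < N.+1) F p.
Proof.
move=> hMN hF; rewrite [RHS](big_cat_nat (n := M.+1)) //=.
by rewrite [X in _ + X]big1_seq ?addr0 // => p /andP[_]; rewrite mem_index_iota => /andP[/hF].
Qed.

Lemma sum_ord_padded (V : nmodType) n N (F : nat -> V) : (n <= N)%N ->
  (forall p, (n < p)%N -> F p = 0) ->
  \sum_(i < n) F i.+1 = \sum_(1 <= p < N.+1) F p.
Proof. by move=> hnN hF; rewrite -(sum_nat_padded hnN hF) big_add1 /= big_mkord. Qed.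

Lemma sum_bcoef_upto9 n (A : hclass n) :
  \sum_(1 <= p < (minn n 9).+1) bcoef A p = \sum_(1 <= p < 10) bcoef A p.
Proof.
have [n_le9|//] := leqP n 9%N.
by rewrite (sum_nat_padded n_le9) // => p hp; rewrite bcoef_out //; lia.
Qed.

Lemma antitone_on (R : numDomainType) n (f : nat -> R) :
  (forall i, (0 < i < n)%N -> f i.+1 <= f i) ->
  forall p q, (0 < p <= q)%N -> (q <= n)%N -> f q <= f p.
Proof.
move=> f_dec p q /andP[hp hpq] hqn.
apply: (@Order.NatMonotonyTheory.nonincn_inP _ _ [pred i | 0 < i <= n]%N) => //=;
  try (apply/andP; lia).
- by move=> i j /andP[? ?] /andP[? ?] m /andP[? ?]; apply/andP; lia.
- by move=> i /andP[? ?] /andP[? ?]; apply: f_dec; lia.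
Qed.

(* A sequence f with f_1 + f_2 + f_3 <= top, nonnegative and nonincreasing from
   index 1 on: the common shape of reduced classes and of reduced cone classes. *)
Definition reduced_seq (R : numDomainType) (top : R) (f : nat -> R) : Prop :=
  [/\ forall p, 0 <= f p, forall p, (0 < p)%N -> f p.+1 <= f p
    & f 1%N + f 2%N + f 3%N <= top].

Lemma zero_extension_reduced (R : numDomainType) n (top : R) (f : nat -> R) :
  (forall p, (p == 0)%N || (n < p)%N -> f p = 0) -> 0 <= f n ->
  (forall i, (0 < i < n)%N -> f i.+1 <= f i) ->
  f 1%N + f 2%N + f 3%N <= top -> reduced_seq top f.
Proof.
move=> f_out fn_ge0 f_dec f_top.
have f_ge0 p : 0 <= f p.
  have [/andP[hp hpn]|hp] := boolP ((0 < p) && (p <= n))%N.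
    by apply: le_trans fn_ge0 _; apply: (antitone_on f_dec) => //; lia.
  by rewrite f_out //; lia.
split=> // p hp; have [hpn|hpn] := ltnP p n; first by apply: f_dec; lia.
by rewrite (f_out p.+1) //; lia.
Qed.

Lemma reduced_seq_intr (R : numDomainType) (a : int) (f : nat -> int) :
  reduced_seq a f -> reduced_seq (a%:~R : R) (fun p => (f p)%:~R).
Proof.
case=> f_ge0 f_dec f_top; split=> [p|p hp|].
- by rewrite ler0z.
- by rewrite ler_int f_dec.
- by rewrite -!intrD ler_int.
Qed.

Lemma reduced_class_seq n (A : hclass n) : reduced A -> reduced_seq A.1 (bcoef A).
Proof.
case=> _ [b_dec [b_ge0 b_top]]; apply: zero_extension_reduced b_top.
- exact: bcoef_out.
- case: n A b_ge0 {b_dec} => [|n] A b_ge0; first by rewrite bcoef_out.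
  by move: (bcoefE A ord_max) => /= ->.
- case=> // j /andP[_ hj].
  by rewrite (bcoefE A (Ordinal hj)) (bcoefE A (Ordinal (ltnW hj))); apply: b_dec => /=.
Qed.

(* The coefficients x_p of a class of the reduced cone form a reduced sequence
   with top x_0 (for n = 1, 2 the missing x_2, x_3 vanish). *)
Lemma cone_seq (R : realFieldType) n (w : cohom R n) :
  (0 < n)%N -> inP w -> reduced_seq w.1 (xcoef w).
Proof.
have x_out := @xcoef_out R n w; rewrite /inP.
case: n w x_out => [|[|[|n]]] // w x_out _.
- case=> x1_gt0 x1_lt; apply: (zero_extension_reduced x_out); first exact: ltW.
    by move=> i; lia.
  by rewrite (x_out 2%N) // (x_out 3%N) // !addr0 ltW.
- case=> x2_gt0 [x2_le x12_lt]; apply: (zero_extension_reduced x_out); first exact: ltW.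
    by move=> [|[|i]] //; lia.
  by rewrite (x_out 3%N) // addr0 ltW.
- by case=> xn_gt0 [x_dec [x_top _]]; exact: (zero_extension_reduced x_out (ltW xn_gt0)).
Qed.

Lemma reduced_seq_antitone (R : numDomainType) (top : R) (f : nat -> R) :
  reduced_seq top f -> forall p q, (0 < p <= q)%N -> f q <= f p.
Proof.
by case=> _ f_dec _ p q hpq; apply: (antitone_on (n := q)) => // i /andP[/f_dec].
Qed.

Lemma tail_bound (R : numDomainType) (x b : nat -> R) m N :
  (forall p, 0 <= x p) -> (forall p, (m < p)%N -> b p <= b m) ->
  \sum_(m.+1 <= p < N) x p * b p <= b m * \sum_(m.+1 <= p < N) x p.
Proof.
move=> x_ge0 b_le; rewrite mulr_sumr; apply: ler_sum_nat => p /andP[hp _].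
by rewrite [x p * _]mulrC ler_wpM2r // b_le.
Qed.

Lemma sum_to_nine (V : nmodType) (F : nat -> V) : \sum_(1 <= p < 10) F p =
  F 1%N + F 2%N + F 3%N + F 4%N + F 5%N + F 6%N + F 7%N + F 8%N + F 9%N.
Proof. by do 9 rewrite big_ltn //; rewrite big_geq // addr0 !addrA. Qed.

(* Its proof is a certificate: the difference of the two sides is a sum of
   products of factors that are nonnegative for reduced sequences. *)
Lemma nine_point_bound (R : realFieldType) (x b : nat -> R) (x0 a k : R) :
  reduced_seq x0 x -> reduced_seq a b ->
  12 * k < 3 * a - \sum_(1 <= p < 10) b p ->
  k * (x0 - x 1%N) <= a * x0 - \sum_(1 <= p < 10) x p * b p
                      - b 9%N * (3 * x0 - \sum_(1 <= p < 10) x p).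
Proof.
move=> [x_ge0 x_dec x_top] [b_ge0 b_dec b_top]; rewrite !sum_to_nine => bound.
have := x_ge0 9%N; have := b_ge0 9%N.
have := x_dec 1%N isT; have := x_dec 2%N isT; have := x_dec 3%N isT; have := x_dec 4%N isT.
have := x_dec 5%N isT; have := x_dec 6%N isT; have := x_dec 7%N isT; have := x_dec 8%N isT.
have := b_dec 1%N isT; have := b_dec 2%N isT; have := b_dec 3%N isT; have := b_dec 4%N isT.
have := b_dec 5%N isT; have := b_dec 6%N isT; have := b_dec 7%N isT; have := b_dec 8%N isT.
move=> *; set h := (x0 - x 1%N) / 2.
have c1 : 0 <= (a - b 1%N - b 2%N - b 3%N) * x 1%N by apply: mulr_ge0; lra.
have c2 : 0 <= (b 2%N - b 3%N) * (x0 - x 2%N) by apply: mulr_ge0; lra.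
have c3 : 0 <= (b 3%N - b 4%N) * (2 * x0 - x 2%N - x 3%N) by apply: mulr_ge0; lra.
have c4 : 0 <= (b 4%N - b 5%N) * (3 * x0 - (x 1%N + x 2%N + x 3%N + x 4%N) - h).
  by apply: mulr_ge0; rewrite /h; lra.
have c5 : 0 <= (b 5%N - b 6%N) *
    (3 * x0 - (x 1%N + x 2%N + x 3%N + x 4%N + x 5%N) - h).
  by apply: mulr_ge0; rewrite /h; lra.
have c6 : 0 <= (b 6%N - b 7%N) *
    (3 * x0 - (x 1%N + x 2%N + x 3%N + x 4%N + x 5%N + x 6%N) - h).
  by apply: mulr_ge0; rewrite /h; lra.
have c7 : 0 <= (b 7%N - b 8%N) *
    (3 * x0 - (x 1%N + x 2%N + x 3%N + x 4%N + x 5%N + x 6%N + x 7%N) - h).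
  by apply: mulr_ge0; rewrite /h; lra.
have c8 : 0 <= (b 8%N - b 9%N) *
    (3 * x0 - (x 1%N + x 2%N + x 3%N + x 4%N + x 5%N + x 6%N + x 7%N + x 8%N) - h).
  by apply: mulr_ge0; rewrite /h; lra.
have c9 : 0 <= (a - b 2%N - b 3%N - b 4%N + (b 4%N - b 9%N) / 2 - k) * (x0 - x 1%N).
  by apply: mulr_ge0; lra.
rewrite /h in c4 c5 c6 c7 c8; lra.
Qed.

Lemma omega_padded (R : realFieldType) n N (w : cohom R n) (A : hclass n) :
  (n <= N)%N ->
  omega w A = w.1 * A.1%:~R - \sum_(1 <= p < N.+1) xcoef w p * (bcoef A p)%:~R.
Proof.
move=> hnN; rewrite /omega; congr (_ - _).
rewrite -(sum_ord_padded (F := fun p => xcoef w p * (bcoef A p)%:~R) hnN); last first.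
  by move=> p hp; rewrite xcoef_out ?mul0r //; lia.
by apply: eq_bigr => i _; rewrite xcoefE bcoefE.
Qed.

Lemma omega_c1 (R : realFieldType) n N (w : cohom R n) : (n <= N)%N ->
  omega w (c1cl n) = 3 * w.1 - \sum_(1 <= p < N.+1) xcoef w p.
Proof.
move=> hnN; rewrite /omega mulrC; congr (_ - _).
rewrite -(sum_ord_padded (F := xcoef w) hnN); last by move=> p hp; rewrite xcoef_out //; lia.
by apply: eq_bigr => i _; rewrite ffunE mulr1 xcoefE.
Qed.

Lemma sum_kHkE1 (V : nmodType) n k (i0 : 'I_n) (F : 'I_n -> int -> V) :
  val i0 = 0%N -> (forall i, F i 0 = 0) ->
  \sum_(i < n) F i ((kHkE1 n k).2 i) = F i0 k%:Z.
Proof.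
move=> i0E F0; rewrite (bigD1 i0) //= ffunE i0E eqxx big1 ?addr0 // => i ne_i_i0.
rewrite ffunE ifN ?F0 //; apply: contra ne_i_i0 => /eqP iE.
by apply/eqP/val_inj; rewrite /= iE i0E.
Qed.

Lemma omega_kHkE1 (R : realFieldType) n k (w : cohom R n) : (0 < n)%N ->
  omega w (kHkE1 n k) = k%:R * (w.1 - xcoef w 1%N).
Proof.
move=> hn; rewrite /omega (@sum_kHkE1 _ n k (Ordinal hn) (fun i z => w.2 i * z%:~R)) //=.
  by rewrite -(xcoefE w (Ordinal hn)) mulrBr mulrC [_ * k%:R]mulrC.
by move=> i; rewrite mulr0.
Qed.

Lemma kHkE1_inU5 n k : (0 < n)%N -> (0 < k)%N -> inU5 k (kHkE1 n k).
Proof.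
move=> hn hk; set B := kHkE1 n k; pose i0 := Ordinal hn.
have sq : \sum_(i < n) B.2 i * B.2 i = k%:Z * k%:Z.
  exact: (@sum_kHkE1 _ n k i0 (fun _ z => z * z)).
have lin : \sum_(i < n) (K0 n).2 i * B.2 i = -1 * k%:Z.
  rewrite -(@sum_kHkE1 _ n k i0 (fun _ z => -1 * z)) //.
  by apply: eq_bigr => i _; rewrite ffunE.
have deg : \sum_(i < n) B.2 i * (Hcl n).2 i = 0.
  by rewrite big1 // => i _; rewrite /= !ffunE mulr0.
by rewrite /inU5 /ind /hdot sq lin deg /=; split; lia.
Qed.

Lemma reduced_cge_kHkE1 (R : realFieldType) n k (A : hclass n) :
  (0 < n)%N -> reduced A -> 12 * k%:Z < 3 * A.1 - \sum_(1 <= p < 10) bcoef A p ->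
  cge R A (kHkE1 n k).
Proof.
move=> hn redA bound w [wP c1_pos].
pose N := maxn n 9; have hnN : (n <= N)%N := leq_maxl n 9.
pose x := xcoef w; pose b p : R := (bcoef A p)%:~R.
have x_red : reduced_seq w.1 x := cone_seq hn wP.
have b_red : reduced_seq (A.1%:~R) b := reduced_seq_intr R (reduced_class_seq redA).
have [[x_ge0 _ _] [b_ge0 _ _]] := (x_red, b_red).
have split_sum (F : nat -> R) : \sum_(1 <= p < N.+1) F p =
    \sum_(1 <= p < 10) F p + \sum_(10 <= p < N.+1) F p.
  by rewrite (big_cat_nat (n := 10)) // ltnS leq_maxr.
have b_le_b9 p : (9 < p)%N -> b p <= b 9%N.
  by move=> hp; apply: (reduced_seq_antitone b_red); rewrite /= ltnW.
have tail := @tail_bound R x b 9 N.+1 x_ge0 b_le_b9.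
have tail_x : \sum_(10 <= p < N.+1) x p <= 3 * w.1 - \sum_(1 <= p < 10) x p.
  by move: c1_pos; rewrite (omega_c1 _ hnN) split_sum; lra.
have tail_b := ler_wpM2l (b_ge0 9%N) tail_x.
have nine := nine_point_bound (k := k%:R) x_red b_red.
move: bound; rewrite -(ltr_int R) !(intrM, intrB) rmorph_sum pmulrn => /nine.
rewrite omega_kHkE1 // (omega_padded _ _ hnN) split_sum -/x.
by move: tail tail_b; rewrite /b /=; lra.
Qed.

Theorem lemma4p5 (n k : nat) (hn : (1 <= n)%N) (hk : (1 <= k)%N) :
  exists Ank Cnk : int, forall A : hclass n,
    inU5 k A -> reduced A -> Ank < A.1 ->
    Cnk < 3 * A.1 - \sum_(1 <= i < (minn n 9).+1) bcoef A i ->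
    1 <= 3 * A.1 - \sum_(1 <= i < n.+1) bcoef A i ->
    cge Rdefinitions.R A (kHkE1 n k) /\ ~ minimalU5 Rdefinitions.R k A.
Proof.
exists k%:Z, (12 * k%:Z) => A _ redA a_gt_k bound _.
rewrite sum_bcoef_upto9 in bound.
have A_ge_B := reduced_cge_kHkE1 (R := Rdefinitions.R) hn redA bound.
split=> // -[_ no_smaller]; apply: no_smaller.
exists (kHkE1 n k); split; first exact: kHkE1_inU5.
by split=> // B_eq_A; move: a_gt_k; rewrite -B_eq_A ltxx.
Qed.
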